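(* Let $\mathcal L:\mathbb F^{q\times q}\to\mathbb F^{n\times n}$ be $*$-linear with matricization $L$ and Choi matrix $\mathbb L$, let $m=\operatorname{rank}\mathbb L$, choose $L_1,\ldots,L_m\in\mathbb F^{n\times q}$ with $\operatorname{span}\{L_1,\ldots,L_m\}=\operatorname{span}\{L_{ij}\}$, and let $A_1,\ldots,A_m$ and $\mathbb H=\mathbb H(\mathcal L;L_1,\ldots,L_m)$ be given by the construction below. Then $$\mathcal L(V)=\sum_{k,l=1}^m\mathbb H_{kl}A_lVA_k^*\ (V\in\mathbb F^{q\times q}),\qquad L=\sum_{k,l=1}^m\mathbb H_{kl}\,\overline{A_k}\otimes A_l,$$ $$\mathbb L=\sum_{k,l=1}^m\mathbb H_{kl}\operatorname{vec}_{n\times q}(A_l)\operatorname{vec}_{n\times q}(\overline{A_k})^T=\widehat A^*\mathbb H^T\widehat A,$$ where $\widehat A^*=[\operatorname{vec}_{n\times q}(A_1)\ \cdots\ \operatorname{vec}_{n\times q}(A_m)]\in\mathbb F^{nq\times m}$. Moreover $\mathbb H$ is Hermitian and invertible.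
   Context: $\mathbb F\in\{\mathbb R,\mathbb C\}$; $\otimes$ Kronecker product, $\circ$ Hadamard product, $\vec{\mathbf 1}_p$ all-ones vector, $\overline{X}$ entrywise conjugate, $\operatorname{vec}$ column-stacking vectorization. For linear $\mathcal L:\mathbb F^{q\times q}\to\mathbb F^{n\times n}$: matricization $L\in\mathbb F^{n^2\times q^2}$ with $L\operatorname{vec}(V)=\operatorname{vec}(\mathcal L(V))$, in blocks $L=[L_{ij}]$, $1\le i\le n$, $1\le j\le q$, $L_{ij}\in\mathbb F^{n\times q}$; Choi matrix $\mathbb L=[\mathcal L(\mathcal E^{(q)}_{ij})]_{i,j=1}^q$. $*$-linear: $\mathcal L(V^* )=\mathcal L(V)^*$. Construction: with $m=\operatorname{rank}\mathbb L=\dim\operatorname{span}\{L_{ij}\}$ and $L_1,\ldots,L_m$ spanning $\operatorname{span}\{L_{ij}\}$, let $L_{ij}=\sum_k\alpha^{ij}_kL_k$ (unique) and $L_k=\sum_{i,j}\beta^k_{ij}L_{ij}$ (any choice of scalars); $A_k$ has $(i,j)$ entry $\overline{\alpha^{ij}_k}$, $B_k$ has $(i,j)$ entry $\beta^k_{ij}$, and $\mathbb H(\mathcal L;L_1,\ldots,L_m)=[\vec{\mathbf 1}_n^*(B_k\circ\overline{L_l})\vec{\mathbf 1}_q]_{k,l=1}^m$. *)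

(* F = R is modelled by an arbitrary [R : realType] (with
   conjugation = identity), F = C by [R[i]] (complex numbers over R, from
   mathcomp-real-closed) with conjugation [Num.conj]. *)
From HB Require Import structures.
From mathcomp Require Import all_boot all_order all_algebra.
From mathcomp Require Import complex.
From mathcomp Require Import reals.
Set Implicit Arguments. Unset Strict Implicit. Unset Printing Implicit Defensive.
Import Order.TTheory GRing.Theory Num.Theory.
Local Open Scope ring_scope.

(* an index k : 'I_(r*c) of a column-stacked r x c matrix corresponds to
   the entry (k %% r, k %/ r); conversely entry (i, j) sits at j*r + i.     *)

Lemma cs_index_proof r c (i : 'I_r) (j : 'I_c) : (j * r + i < r * c)%N.
Proof.
have hi := ltn_ord i; have hj := ltn_ord j.
apply: (@leq_trans (j.+1 * r)); first by rewrite mulSn addnC ltn_add2r.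
by rewrite mulnC leq_mul2l hj orbT.
Qed.

Lemma cs_row_proof r c (k : 'I_(r * c)) : (k %% r < r)%N.
Proof.
have hk := ltn_ord k; move: (nat_of_ord k) hk => k' hk; clear k.
by case: r hk => [|r] hk; [rewrite mul0n in hk | rewrite ltn_pmod].
Qed.

Lemma cs_col_proof r c (k : 'I_(r * c)) : (k %/ r < c)%N.
Proof.
have hk := ltn_ord k; move: (nat_of_ord k) hk => k' hk; clear k.
case: r hk => [|r] hk; first by rewrite mul0n in hk.
by rewrite ltn_divLR // mulnC.
Qed.

Definition cs_index r c (i : 'I_r) (j : 'I_c) : 'I_(r * c) :=
  Ordinal (cs_index_proof i j).
Definition cs_row r c (k : 'I_(r * c)) : 'I_r := Ordinal (cs_row_proof k).
Definition cs_col r c (k : 'I_(r * c)) : 'I_c := Ordinal (cs_col_proof k).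

Section Defs.
Variables (F : fieldType) (cj : F -> F).

Definition mconj r c (X : 'M[F]_(r, c)) : 'M[F]_(r, c) := map_mx cj X.
Definition adj r c (X : 'M[F]_(r, c)) : 'M[F]_(c, r) := (mconj X)^T.

Definition cvec r c (X : 'M[F]_(r, c)) : 'cV[F]_(r * c) :=
  \col_k X (cs_row k) (cs_col k).

(* Kronecker product: (A (x) B)[(i1-1)p2+i2, (j1-1)q2+j2] = A_{i1j1} B_{i2j2} *)
Definition kron p1 q1 p2 q2 (A : 'M[F]_(p1, q1)) (B : 'M[F]_(p2, q2))
  : 'M[F]_(p2 * p1, q2 * q1) :=
  \matrix_(a, b) (A (cs_col a) (cs_col b) * B (cs_row a) (cs_row b)).

Definition hadamard r c (A B : 'M[F]_(r, c)) : 'M[F]_(r, c) :=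
  \matrix_(i, j) (A i j * B i j).
Definition ones p : 'cV[F]_p := const_mx 1.

Definition star_linear n q (L : 'M[F]_q -> 'M[F]_n) : Prop :=
  forall V, L (adj V) = adj (L V).

Definition blk n q (Lm : 'M[F]_(n * n, q * q)) (i : 'I_n) (j : 'I_q)
  : 'M[F]_(n, q) := \matrix_(a, c) Lm (cs_index a i) (cs_index c j).

(* Choi matrix [L(E_ij)]_{i,j=1}^q  (nq x nq) *)
Definition choi n q (L : 'M[F]_q -> 'M[F]_n) : 'M[F]_(n * q, n * q) :=
  \matrix_(x, y) L (delta_mx (cs_col x) (cs_col y)) (cs_row x) (cs_row y).

Definition Amat n q m (alpha : 'I_n -> 'I_q -> 'I_m -> F) (k : 'I_m)
  : 'M[F]_(n, q) := \matrix_(i, j) cj (alpha i j k).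
Definition Bmat n q m (beta : 'I_m -> 'I_n -> 'I_q -> F) (k : 'I_m)
  : 'M[F]_(n, q) := \matrix_(i, j) beta k i j.
Definition Hmat n q m (beta : 'I_m -> 'I_n -> 'I_q -> F)
  (Ls : 'I_m -> 'M[F]_(n, q)) : 'M[F]_m :=
  \matrix_(k, l) (adj (ones n) *m hadamard (Bmat beta k) (mconj (Ls l))
                   *m ones q) 0 0.

Definition Ahat_star n q m (A : 'I_m -> 'M[F]_(n, q)) : 'M[F]_(n * q, m) :=
  \matrix_(x, k) cvec (A k) x 0.

Definition Theorem51 : Prop :=
  forall (n q : nat) (L : {linear 'M[F]_q -> 'M[F]_n})
    (Lm : 'M[F]_(n * n, q * q)),
    star_linear L ->
    (forall V : 'M[F]_q, Lm *m cvec V = cvec (L V)) ->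
  let m := \rank (choi L) in
  forall (Ls : 'I_m -> 'M[F]_(n, q)),
    (<<[seq Ls k | k <- enum 'I_m]>> =
     <<[seq blk Lm i j | i <- enum 'I_n, j <- enum 'I_q]>>)%VS ->
  forall (alpha : 'I_n -> 'I_q -> 'I_m -> F),
    (forall i j, blk Lm i j = \sum_k alpha i j k *: Ls k) ->
  forall (beta : 'I_m -> 'I_n -> 'I_q -> F),
    (forall k, Ls k = \sum_i \sum_j beta k i j *: blk Lm i j) ->
  let A := Amat alpha in
  let H := Hmat beta Ls in
  [/\ (forall V : 'M[F]_q,
        L V = \sum_k \sum_l H k l *: (A l *m V *m adj (A k))),
      Lm = \sum_k \sum_l H k l *: kron (mconj (A k)) (A l),
      choi L = \sum_k \sum_l H k l *: (cvec (A l) *m (cvec (mconj (A k)))^T)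
        /\ choi L = Ahat_star A *m H^T *m adj (Ahat_star A),
      adj H = H
    & H \in unitmx].

End Defs.

From HB Require Import structures.
From mathcomp Require Import all_boot all_order all_algebra.
From mathcomp Require Import complex.
From mathcomp Require Import reals.
From mathcomp Require Import ring.
Set Implicit Arguments. Unset Strict Implicit. Unset Printing Implicit Defensive.
Import Order.TTheory GRing.Theory Num.Theory.
Local Open Scope ring_scope.

(* Everything is read off the Choi matrix C = choi L (nq x nq).  Writing
   P = [vec L_1 ... vec L_m], Q = adj(Ahat) (the m x nq matrix of the
   alpha's) and B = [vec B_1 ... vec B_m], the two expansion hypotheses say
   exactly  C = P Q  and  P = C B,  while  H = B^T conj(P).  *-linearity of L
   makes C conjugate-symmetric:  conj(C) = C^T.  A purely matrix-theoretic
   argument (valid over any field with an involutive conjugation) then shows: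
   since rank C = m, P has full column rank and Q B = 1; hence
   P^T = H conj(Q), H is Hermitian and invertible, and C = adj(Q) H^T Q.
   Expanding this product entrywise gives the rank-one sum for C, and the
   formulas for L(V) and for the matricization L follow because both are
   determined entrywise by C.  The theorem is proved for an arbitrary
   involutive ring morphism as conjugation, then specialized to F = R
   (identity) and F = C (complex conjugation). *)

Section ColumnStacking.
Variables r c : nat.

Lemma cs_row_index (i : 'I_r) (j : 'I_c) : cs_row (cs_index i j) = i.
Proof. by apply: val_inj => /=; rewrite modnMDl modn_small. Qed.

Lemma cs_col_index (i : 'I_r) (j : 'I_c) : cs_col (cs_index i j) = j.
Proof.
apply: val_inj => /=; have hi := ltn_ord i.
by rewrite divnMDl ?(leq_ltn_trans _ hi) // divn_small // addn0.
Qed.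

Lemma cs_index_rowcol (y : 'I_(r * c)) : cs_index (cs_row y) (cs_col y) = y.
Proof. by apply: val_inj => /=; rewrite -divn_eq. Qed.

Lemma cs_eq (x y : 'I_(r * c)) :
  (x == y) = (cs_row x == cs_row y) && (cs_col x == cs_col y).
Proof.
apply/eqP/andP => [-> //|[/eqP ex /eqP ey]].
by rewrite -[x]cs_index_rowcol -[y]cs_index_rowcol ex ey.
Qed.

Lemma sum_cs (V : nmodType) (G : 'I_r -> 'I_c -> V) :
  \sum_(y < r * c) G (cs_row y) (cs_col y) = \sum_i \sum_j G i j.
Proof.
rewrite pair_bigA /= (reindex (fun p : 'I_r * 'I_c => cs_index p.1 p.2)) /=.
  by apply: eq_bigr => -[i j] _; rewrite cs_row_index cs_col_index.
exists (fun y => (cs_row y, cs_col y)) => [[i j] _|y _] /=.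
  by rewrite cs_row_index cs_col_index.
by rewrite cs_index_rowcol.
Qed.

End ColumnStacking.

Lemma exchange_big4 (V : nmodType) p1 p2 p3 p4
    (f : 'I_p1 -> 'I_p2 -> 'I_p3 -> 'I_p4 -> V) :
  \sum_a \sum_b \sum_c \sum_d f a b c d = \sum_c \sum_d \sum_a \sum_b f a b c d.
Proof.
rewrite (eq_bigr (fun a => \sum_c \sum_d \sum_b f a b c d)); last first.
  by move=> a _; rewrite exchange_big; apply: eq_bigr => c _; rewrite exchange_big.
by rewrite exchange_big; apply: eq_bigr => c _; rewrite exchange_big.
Qed.

Section Matricization.
Variable F : fieldType.

Lemma cvec_delta r c (y : 'I_(r * c)) :
  cvec (delta_mx (cs_row y) (cs_col y)) = delta_mx y 0 :> 'cV[F]_(r * c).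
Proof. by apply/matrixP => x k; rewrite !mxE (ord1 k) eqxx andbT cs_eq. Qed.

Lemma matricization_entry n q (L : 'M[F]_q -> 'M[F]_n) Lm :
  (forall V, Lm *m cvec V = cvec (L V)) ->
  forall x y, Lm x y = L (delta_mx (cs_row y) (cs_col y)) (cs_row x) (cs_col x).
Proof.
move=> HLm x y.
have := congr1 (fun M : 'cV_(n * n) => M x 0) (HLm (delta_mx (cs_row y) (cs_col y))).
by rewrite cvec_delta -colE !mxE => <-.
Qed.

Lemma choi_entry n q (L : 'M[F]_q -> 'M[F]_n) a c i j :
  choi L (cs_index a c) (cs_index i j) = L (delta_mx c j) a i.
Proof. by rewrite mxE !cs_row_index !cs_col_index. Qed.

Lemma linear_choi_entry n q (L : {linear 'M[F]_q -> 'M[F]_n}) V a i :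
  L V a i = \sum_c \sum_j V c j * choi L (cs_index a c) (cs_index i j).
Proof.
rewrite {1}(matrix_sum_delta V) linear_sum summxE; apply: eq_bigr => c _.
rewrite linear_sum summxE; apply: eq_bigr => j _.
by rewrite linearZ mxE choi_entry.
Qed.

End Matricization.

Section Conjugation.
Variables (F : fieldType) (cj : {rmorphism F -> F}).
Hypothesis cjK : involutive cj.

Lemma mconjM a b c (X : 'M[F]_(a, b)) (Y : 'M[F]_(b, c)) :
  mconj cj (X *m Y) = mconj cj X *m mconj cj Y.
Proof. exact: map_mxM. Qed.

Lemma mconjK a b (X : 'M[F]_(a, b)) : mconj cj (mconj cj X) = X.
Proof. by apply/matrixP => i j; rewrite !mxE cjK. Qed.

Lemma mconj_tr a b (X : 'M[F]_(a, b)) : mconj cj X^T = (mconj cj X)^T.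
Proof. by apply/matrixP => i j; rewrite !mxE. Qed.

Lemma adjK a b (X : 'M[F]_(a, b)) : adj cj (adj cj X) = X.
Proof. by rewrite /adj mconj_tr mconjK trmxK. Qed.

Lemma adj_delta q (i j : 'I_q) : adj cj (delta_mx i j) = delta_mx j i.
Proof.
apply/matrixP => a b; rewrite !mxE.
by case: (a == j); case: (b == i); rewrite /= ?rmorph0 ?rmorph1.
Qed.

Lemma choi_conj_sym n q (L : 'M[F]_q -> 'M[F]_n) :
  star_linear cj L -> mconj cj (choi L) = (choi L)^T.
Proof.
move=> Lstar; apply/matrixP => x y; rewrite !mxE.
by rewrite -adj_delta Lstar !mxE.
Qed.

Section RankFactorization.
Variables (N m : nat) (C : 'M[F]_N) (P : 'M[F]_(N, m)) (Q : 'M[F]_(m, N))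
  (B : 'M[F]_(N, m)).
Hypotheses (rankC : \rank C = m) (CPQ : C = P *m Q) (PCB : P = C *m B).

Lemma rank_left_factor : \rank P = m.
Proof.
apply/eqP; rewrite eqn_leq rank_leq_col /= -{1}rankC CPQ.
exact: mxrankM_maxl.
Qed.

Lemma right_factor_inverse : Q *m B = 1%:M.
Proof.
have Pfree : row_free P^T by rewrite /row_free mxrank_tr rank_left_factor.
apply: trmx_inj; apply: (row_free_inj Pfree).
by rewrite trmx1 mul1mx -trmx_mul mulmxA -CPQ -PCB.
Qed.

Hypothesis Csym : mconj cj C = C^T.
Let H := B^T *m mconj cj P.

Lemma left_factor_tr : P^T = H *m mconj cj Q.
Proof. by rewrite -mulmxA -mconjM -CPQ Csym -trmx_mul -PCB. Qed.

Lemma coef_hermitian : adj cj H = H.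
Proof.
rewrite /adj mconjM mconjK mconj_tr trmx_mul trmxK left_factor_tr.
by rewrite -mulmxA -mconjM right_factor_inverse /mconj map_mx1 mulmx1.
Qed.

Lemma coef_unit : H \in unitmx.
Proof.
rewrite -row_free_unit /row_free eqn_leq rank_leq_row /=.
rewrite -{1}rank_left_factor -mxrank_tr left_factor_tr.
exact: mxrankM_maxl.
Qed.

Lemma choi_sandwich : C = adj cj Q *m H^T *m Q.
Proof. by rewrite CPQ -[P]trmxK left_factor_tr trmx_mul. Qed.

End RankFactorization.

Section Construction.
Variables (n q m : nat) (L : 'M[F]_q -> 'M[F]_n) (Lm : 'M[F]_(n * n, q * q)).
Hypothesis HLm : forall V, Lm *m cvec V = cvec (L V).

Lemma choi_blk x y :
  choi L x y = blk Lm (cs_row y) (cs_col y) (cs_row x) (cs_col x).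
Proof. by rewrite !mxE (matricization_entry HLm) !cs_row_index !cs_col_index. Qed.

Lemma choi_factor (Ls : 'I_m -> 'M[F]_(n, q)) alpha :
  (forall i j, blk Lm i j = \sum_k alpha i j k *: Ls k) ->
  choi L = Ahat_star Ls *m adj cj (Ahat_star (Amat cj alpha)).
Proof.
move=> Halpha; apply/matrixP => x y; rewrite choi_blk Halpha summxE !mxE.
by apply: eq_bigr => k _; rewrite !mxE cjK mulrC.
Qed.

Lemma left_factor_choi (Ls : 'I_m -> 'M[F]_(n, q)) beta :
  (forall k, Ls k = \sum_i \sum_j beta k i j *: blk Lm i j) ->
  Ahat_star Ls = choi L *m Ahat_star (Bmat beta).
Proof.
move=> Hbeta; apply/matrixP => y k; rewrite !mxE Hbeta.
under [RHS]eq_bigr => x _ do rewrite choi_blk !mxE.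
rewrite (sum_cs (fun i j =>
  Lm (cs_index (cs_row y) i) (cs_index (cs_col y) j) * beta k i j)).
rewrite summxE; apply: eq_bigr => i _; rewrite summxE; apply: eq_bigr => j _.
by rewrite !mxE mulrC.
Qed.

End Construction.

Lemma Hmat_coef n q m (beta : 'I_m -> 'I_n -> 'I_q -> F) Ls :
  Hmat cj beta Ls = (Ahat_star (Bmat beta))^T *m mconj cj (Ahat_star Ls).
Proof.
apply/matrixP => k l; rewrite !mxE.
under [RHS]eq_bigr => x _ do rewrite !mxE.
rewrite (sum_cs (fun i j => beta k i j * cj (Ls l i j))) exchange_big /=.
apply: eq_bigr => j _; rewrite !mxE mulr1; apply: eq_bigr => i _.
by rewrite !mxE rmorph1 mul1r.
Qed.

Lemma Ahat_star_sandwich n q m (A : 'I_m -> 'M[F]_(n, q)) (H : 'M[F]_m) :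
  Ahat_star A *m H^T *m adj cj (Ahat_star A)
  = \sum_k \sum_l H k l *: (cvec (A l) *m (cvec (mconj cj (A k)))^T).
Proof.
apply/matrixP => x y; rewrite !mxE summxE; apply: eq_bigr => k _.
rewrite !mxE big_distrl summxE; apply: eq_bigr => l _.
by rewrite !mxE big_ord1 !mxE /= mulrA (mulrC (A l _ _)).
Qed.

Lemma rank_one_sum_entry n q m (A : 'I_m -> 'M[F]_(n, q)) (H : 'M[F]_m)
    a c i j :
  (\sum_k \sum_l H k l *: (cvec (A l) *m (cvec (mconj cj (A k)))^T))
    (cs_index a c) (cs_index i j)
  = \sum_k \sum_l H k l * (A l a c * cj (A k i j)).
Proof.
rewrite summxE; apply: eq_bigr => k _; rewrite summxE; apply: eq_bigr => l _.
by rewrite !mxE big_ord1 !mxE !cs_row_index !cs_col_index.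
Qed.

Section ChoiExpansion.
Variables (n q m : nat) (L : {linear 'M[F]_q -> 'M[F]_n})
  (A : 'I_m -> 'M[F]_(n, q)) (H : 'M[F]_m).
Hypothesis choiE : forall a c i j,
  choi L (cs_index a c) (cs_index i j)
  = \sum_k \sum_l H k l * (A l a c * cj (A k i j)).

Lemma kraus_from_choi V :
  L V = \sum_k \sum_l H k l *: (A l *m V *m adj cj (A k)).
Proof.
apply/matrixP => a i; rewrite linear_choi_entry summxE.
transitivity (\sum_c \sum_j \sum_k \sum_l
                V c j * (H k l * (A l a c * cj (A k i j)))).
  apply: eq_bigr => c _; apply: eq_bigr => j _.
  by rewrite choiE big_distrr; apply: eq_bigr => k _; rewrite big_distrr.
rewrite exchange_big4; apply: eq_bigr => k _; rewrite summxE.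
apply: eq_bigr => l _; rewrite !mxE big_distrr /=.
under [RHS]eq_bigr => j _ do rewrite !mxE big_distrl big_distrr /=.
rewrite [RHS]exchange_big; apply: eq_bigr => c _; apply: eq_bigr => j _.
by ring.
Qed.

Lemma kron_from_choi (Lm : 'M[F]_(n * n, q * q)) :
  (forall V, Lm *m cvec V = cvec (L V)) ->
  Lm = \sum_k \sum_l H k l *: kron (mconj cj (A k)) (A l).
Proof.
move=> HLm; apply/matrixP => x y.
rewrite (matricization_entry HLm) -choi_entry choiE summxE.
apply: eq_bigr => k _; rewrite summxE; apply: eq_bigr => l _.
by rewrite !mxE (mulrC (cj _)).
Qed.

End ChoiExpansion.

Lemma Theorem51_conj : Theorem51 cj.
Proof.
move=> n q L Lm Lstar HLm m Ls _ alpha Halpha beta Hbeta A H.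
set P := Ahat_star Ls; set B := Ahat_star (Bmat beta).
have CPQ : choi L = P *m adj cj (Ahat_star A) := choi_factor HLm Halpha.
have PCB : P = choi L *m B := left_factor_choi HLm Hbeta.
have HE : H = B^T *m mconj cj P := Hmat_coef beta Ls.
have Csym := choi_conj_sym Lstar.
have rankC : \rank (choi L) = m by [].
have sandwich : choi L = Ahat_star A *m H^T *m adj cj (Ahat_star A).
  by rewrite HE {1}(choi_sandwich CPQ PCB Csym) adjK.
have rank_one := etrans sandwich (Ahat_star_sandwich A H).
have choiE a c i j : choi L (cs_index a c) (cs_index i j)
    = \sum_k \sum_l H k l * (A l a c * cj (A k i j)).
  by rewrite rank_one rank_one_sum_entry.
split.
- exact: kraus_from_choi choiE.
- exact (kron_from_choi choiE HLm).
- by split.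
- by rewrite HE; exact: coef_hermitian rankC CPQ PCB Csym.
- by rewrite HE; exact: coef_unit rankC CPQ PCB Csym.
Qed.

End Conjugation.

Theorem theorem5p1 :
  (forall R : realType, Theorem51 (id : R -> R)) /\
  (forall R : realType, Theorem51 (fun z : R[i] => z^*)).
Proof.
split => R.
- exact: (@Theorem51_conj R idfun (fun x => erefl)).
- exact: (@Theorem51_conj R[i] Num.conj conjCK).
Qed.
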